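(* Let $\rho_X,\rho_Z\in(0,1/2)$ and let $C\sim\mathrm{CSS}_n(\rho_X,\rho_Z)$ be a random CSS code. For any constant $f\in(0,1)$, $$\Pr_C\big(B_C(f)\cap L_Z(C)\neq\emptyset\big)\le 2^{-n(\rho_X-6f)}$$ for all sufficiently large $n$.
   Context: $\mathrm{CSS}_n(\rho_X,\rho_Z)$ (with $\rho_Xn,\rho_Zn$ integers): choose $H_Z\in\mathbb{F}_2^{\rho_Zn\times n}$ uniformly at random, then $H_X\in\mathbb{F}_2^{\rho_Xn\times n}$ uniformly at random among matrices with $H_XH_Z^{\mathrm T}=0$; $C=(H_X,H_Z)$. $L_Z(C)=\ker H_X\setminus\mathrm{row}(H_Z)$ is the set of nontrivial logical $Z$ operators (as vectors in $\mathbb{F}_2^n$). Let $S_Z$ be the set of rows of $H_Z$. For $i\in[n]$, $Y_C^i=\{y\in\mathbb{F}_2^n:\exists s\in S_Z,\ y_j=s_j\ \forall j\le i,\ y_j=0\ \forall j>i\}$, and $Y_C=\bigcup_i Y_C^i$. The $Y$-weight $|w|_Y$ of $w\in\mathbb{F}_2^n$ is the minimum size of $S\subseteq Y_C$ with $w=\sum_{s\in S}s$. $B_C(f)=\{w\in\mathbb{F}_2^n:|w|_Y\le fn/\log n\}$. *)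

From HB Require Import structures.
From mathcomp Require Import all_boot all_order all_algebra.
From mathcomp Require Import reals exp.
Set Implicit Arguments. Unset Strict Implicit. Unset Printing Implicit Defensive.
Import Order.TTheory GRing.Theory Num.Theory.
Local Open Scope ring_scope.

Section CSS.
Variables (mX mZ n : nat).

Definition rowsZ (HZ : 'M['F_2]_(mZ, n)) : {set 'rV['F_2]_n} :=
  [set row i HZ | i : 'I_mZ].

(* Y_C = union over i in [n] of the length-i prefixes of rows of H_Z.
   With 0-based indices, the prefix up to (0-based) position i : 'I_n
   keeps coordinates j <= i, i.e. the first i+1 coordinates. *)
Definition Yset (HZ : 'M['F_2]_(mZ, n)) : {set 'rV['F_2]_n} :=
  [set y : 'rV['F_2]_n | [exists s in rowsZ HZ, [exists i : 'I_n,
      [forall j : 'I_n, y 0 j == (if (j <= i)%N then s 0 j else 0)]]]].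

Definition LZ (HX : 'M['F_2]_(mX, n)) (HZ : 'M['F_2]_(mZ, n)) : {set 'rV['F_2]_n} :=
  [set w | (HX *m w^T == 0) && ~~ (w <= HZ)%MS].

(* |w|_Y <= k : some S subset of Y_C with |S| <= k sums to w
   (i.e. the minimum defining the Y-weight exists and is <= k). *)
Definition Yweight_le (R : realType) (HZ : 'M['F_2]_(mZ, n)) (w : 'rV['F_2]_n) (k : R) : bool :=
  [exists S : {set 'rV['F_2]_n},
     [&& S \subset Yset HZ, (#|S|%:R <= k) & w == \sum_(s in S) s]].

Definition in_BC (R : realType) (f : R) (HZ : 'M['F_2]_(mZ, n)) (w : 'rV['F_2]_n) : bool :=
  Yweight_le HZ w (f * n%:R / (ln (n%:R : R) / ln 2)).

Definition bad_event (R : realType) (f : R) (HX : 'M['F_2]_(mX, n)) (HZ : 'M['F_2]_(mZ, n)) : bool :=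
  [exists w : 'rV['F_2]_n, (w \in LZ HX HZ) && in_BC f HZ w].

Definition orthX (HZ : 'M['F_2]_(mZ, n)) : {set 'M['F_2]_(mX, n)} :=
  [set HX | HX *m HZ^T == 0].

(* Pr over C ~ CSS_n : H_Z uniform, then H_X uniform in orthX H_Z *)
Definition Pr_bad (R : realType) (f : R) : R :=
  \sum_(HZ : 'M['F_2]_(mZ, n))
     (#|[set HX in orthX HZ | bad_event f HX HZ]|%:R / #|orthX HZ|%:R)
       / #|{: 'M['F_2]_(mZ, n)}|%:R.

End CSS.

From mathcomp Require Import all_boot all_order all_algebra.
From mathcomp Require Import reals exp.
From mathcomp Require Import zify ring lra.

(** Fix H_Z. A vector of Y-weight at most k = f n / log2 n is a sum of at most
   k of the at most mZ n prefixes of rows of H_Z, so there are at most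
   (mZ n + 1)^k <= n^(3k) = 2^(3 f n) of them. If w is not in the row space of
   H_Z, a vector c with H_Z c = 0 and w.c = 1 shows that H_X |-> H_X + v c^T
   (v ranging over 'F_2^mX) injects the H_X annihilating w into the admissible
   H_X, so at most a 2^(-mX) fraction of them annihilate w. A union bound over
   w bounds the conditional probability, for every H_Z, by 2^(3 f n - rhoX n). *)

Set Implicit Arguments.
Unset Strict Implicit.
Unset Printing Implicit Defensive.

Import Order.TTheory GRing.Theory Num.Theory.
Local Open Scope ring_scope.

Lemma notin_row_space_dual (F : fieldType) k n (V : 'M[F]_(k, n)) (w : 'rV[F]_n) :
  ~~ (w <= V)%MS -> exists2 c : 'cV[F]_n, V *m c = 0 & w *m c = 1%:M.
Proof.
rewrite submxE; set u := w *m cokermx V => u_neq0.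
have /existsP[j uj_neq0] : [exists j, u 0 j != 0].
  apply: contraR u_neq0; rewrite negb_exists => /forallP uj0.
  by apply/eqP/rowP => j; rewrite [RHS]mxE; apply/eqP/negbNE/uj0.
exists ((u 0 j)^-1 *: (cokermx V *m delta_mx j 0)).
  by rewrite -scalemxAr mulmxA mulmx_coker mul0mx scaler0.
rewrite -scalemxAr mulmxA -/u -colE; clearbody u; apply/matrixP => i i'.
by rewrite !ord1 !mxE eqxx mulVf.
Qed.

Section Annihilators.
Variables (F : finFieldType) (m n k : nat) (V : 'M[F]_(k, n)).

Local Notation orth := [set H : 'M[F]_(m, n) | H *m V^T == 0].

Lemma card_annihilators_notin (w : 'rV[F]_n) : ~~ (w <= V)%MS ->
  (#|[set H in orth | H *m w^T == 0%R]| * #|F| ^ m <= #|orth|)%N.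
Proof.
case/notin_row_space_dual => c Vc0 wc1.
pose shift (p : 'M[F]_(m, n) * 'cV[F]_m) := p.1 + p.2 *m c^T.
have Vshift v : v *m c^T *m V^T = 0.
  by rewrite -mulmxA -trmx_mul Vc0 trmx0 mulmx0.
have shift_inj : {in setX [set H in orth | H *m w^T == 0] setT &, injective shift}.
  move=> [H1 v1] [H2 v2]; rewrite !inE /= => /andP[/andP[_ /eqP H1w] _].
  move=> /andP[/andP[_ /eqP H2w] _] eq_shift.
  have v12 : v1 = v2.
    have := congr1 (mulmx^~ w^T) eq_shift.
    by rewrite /shift !mulmxDl H1w H2w -!mulmxA -trmx_mul wc1 trmx1 !mulmx1 !add0r.
  by move: eq_shift; rewrite /shift v12 /= => /addIr ->.
have card_cols : #|{: 'cV[F]_m}| = (#|F| ^ m)%N by rewrite card_mx muln1.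
rewrite -card_cols -cardsT -cardsX -(card_in_imset shift_inj).
apply/subset_leq_card/subsetP => _ /imsetP[[H v] + ->].
rewrite !inE /= => /andP[/andP[/eqP HV _] _].
by rewrite /shift mulmxDl HV Vshift addr0.
Qed.

End Annihilators.

Section SmallSums.
Variable V : finZmodType.

Definition small_sums (Y : {set V}) (K : nat) : {set V} :=
  [set w | [exists S : {set V},
              [&& S \subset Y, (#|S| <= K)%N & w == \sum_(s in S) s]]].

Lemma sum_set_nth (S : {set V}) K : (#|S| <= K)%N ->
  \sum_(s in S) s = \sum_(i < K) nth 0 (enum S) i.
Proof.
move=> SK; rewrite -big_enum (big_nth 0) big_mkord cardE in SK *.
rewrite (big_ord_widen _ _ SK) big_mkcond /=; apply: eq_bigr => i _.
by case: ltnP => // /(nth_default 0)->.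
Qed.

Lemma card_small_sums (Y : {set V}) K M :
  (#|Y| <= M)%N -> (#|small_sums Y K| <= M.+1 ^ K)%N.
Proof.
move=> YM.
pose sum_ffun (g : {ffun 'I_K -> V}) := \sum_i g i.
have sub_image :
    small_sums Y K \subset [set sum_ffun g | g in ffun_on (mem (0 |: Y))].
  apply/subsetP => _ /[!inE] /existsP[S /and3P[SY SK /eqP->]].
  apply/imsetP; exists [ffun i : 'I_K => nth 0 (enum S) i].
    apply/ffun_onP => i; rewrite ffunE !inE.
    have [iS|] := ltnP i (size (enum S)).
      by rewrite (subsetP SY) ?orbT // -mem_enum mem_nth.
    by move/(nth_default 0)->; rewrite eqxx.
  by rewrite (sum_set_nth SK); apply: eq_bigr => i _; rewrite ffunE.
rewrite (leq_trans (subset_leq_card sub_image)) // (leq_trans (leq_imset_card _ _)) //.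
rewrite card_ffun_on card_ord; case: K {sum_ffun sub_image} => // K.
by rewrite leq_exp2r // cardsU1 -add1n leq_add ?leq_b1.
Qed.

End SmallSums.

Lemma card_bigcup_leq (I T : finType) (P : {pred I}) (F : I -> {set T}) :
  (#|\bigcup_(i in P) F i| <= \sum_(i in P) #|F i|)%N.
Proof.
elim/big_ind2: _ => // [|m A k B Am Bk]; first by rewrite cards0.
by rewrite (leq_trans (leq_card_setU _ _).1) ?leq_add.
Qed.

Lemma mean_le (R : numFieldType) (T : finType) (g : T -> R) (B : R) :
  (0 < #|T|)%N -> (forall x, g x <= B) -> \sum_x g x / #|T|%:R <= B.
Proof.
move=> T_gt0 gB; rewrite -mulr_suml ler_pdivrMr ?ltr0n // mulr_natr -sumr_const.
by apply: ler_sum => x _; apply: gB.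
Qed.

Section CSSCounting.
Variables mX mZ n : nat.

Lemma card_Yset (HZ : 'M['F_2]_(mZ, n)) : (#|Yset HZ| <= mZ * n)%N.
Proof.
pose prefix (p : 'I_mZ * 'I_n) := \row_j (if (j <= p.2)%N then HZ p.1 j else 0).
have Yset_prefix : Yset HZ \subset [set prefix p | p : 'I_mZ * 'I_n].
  apply/subsetP => y /[!inE] /existsP[_ /andP[/imsetP[r _ ->]]].
  case/existsP => i /forallP y_i.
  apply/imsetP; exists (r, i) => //; apply/rowP => j.
  by rewrite (eqP (y_i j)) !mxE; case: ifP; rewrite ?mxE.
rewrite (leq_trans (subset_leq_card Yset_prefix)) // (leq_trans (leq_imset_card _ _)) //.
by rewrite card_prod !card_ord.
Qed.

Lemma in_BC_small_sums (R : realType) (f : R) (HZ : 'M['F_2]_(mZ, n)) w :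
  in_BC f HZ w ->
  w \in small_sums (Yset HZ) (Num.truncn (f * n%:R / (ln n%:R / ln 2))).
Proof.
case/existsP => S /and3P[SY Sk /eqP->]; rewrite inE; apply/existsP; exists S.
by rewrite SY eqxx andbT truncn_ge_nat ?Sk // (le_trans _ Sk).
Qed.

Lemma card_bad_codes (R : realType) (f : R) (HZ : 'M['F_2]_(mZ, n)) K :
  (forall w, in_BC f HZ w -> w \in small_sums (Yset HZ) K) ->
  (#|[set HX in orthX mX HZ | bad_event f HX HZ]| * 2 ^ mX
     <= (mZ * n).+1 ^ K * #|orthX mX HZ|)%N.
Proof.
move=> BC_small.
set W := [set w in small_sums (Yset HZ) K | ~~ (w <= HZ)%MS].
have bad_cover : [set HX in orthX mX HZ | bad_event f HX HZ]
    \subset \bigcup_(w in W) [set HX in orthX mX HZ | HX *m w^T == 0].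
  apply/subsetP => HX /[!inE] /andP[HXorth /existsP[w /andP[]]].
  rewrite inE => /andP[HXw wHZ] wBC; apply/bigcupP; exists w.
    by rewrite inE BC_small.
  by rewrite !inE HXorth.
apply: (leq_trans (leq_mul (subset_leq_card bad_cover) (leqnn _))).
apply: (leq_trans (leq_mul (card_bigcup_leq _ _) (leqnn _))).
rewrite big_distrl /= (@leq_trans (\sum_(w in W) #|orthX mX HZ|)) //.
  apply: leq_sum => w /[!inE] /andP[_ wHZ].
  by have := card_annihilators_notin mX wHZ; rewrite card_Fp.
have W_small : W \subset small_sums (Yset HZ) K by apply/subsetP => w /[!inE] /andP[].
rewrite sum_nat_const leq_mul2r (leq_trans (subset_leq_card W_small)) ?orbT //.
exact: card_small_sums (card_Yset HZ).
Qed.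

Lemma Pr_bad_le (R : realType) (f : R) K :
  (forall (HZ : 'M['F_2]_(mZ, n)) w,
     in_BC f HZ w -> w \in small_sums (Yset HZ) K) ->
  Pr_bad mX mZ n f <= ((mZ * n).+1 ^ K)%:R / (2 ^ mX)%:R.
Proof.
move=> BC_small; apply: mean_le => [|HZ].
  by rewrite card_mx card_Fp // expn_gt0.
have orth_gt0 : (0 < #|orthX mX HZ|)%N.
  by rewrite card_gt0; apply/set0Pn; exists 0; rewrite inE mul0mx.
rewrite ler_pdivrMr ?ltr0n // mulrAC ler_pdivlMr ?ltr0n ?expn_gt0 //.
rewrite -!natrM ler_nat.
exact: card_bad_codes (BC_small HZ).
Qed.

End CSSCounting.

Lemma succ_mul_le_cube m n : (m <= n)%N -> (2 <= n)%N -> ((m * n).+1 <= n ^ 3)%N.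
Proof. by move=> mn n2; rewrite expnS expnS expn1; nia. Qed.

Lemma powR_div_log2 (R : realType) (x y : R) :
  1 < x -> x `^ (y / (ln x / ln 2)) = 2 `^ y.
Proof.
move=> x_gt1; have lnx_gt0 := ln_gt0 x_gt1.
have ln2_gt0 : 0 < ln (2 : R) by apply: ln_gt0; rewrite ltr1n.
rewrite /powR gt_eqF ?(lt_trans ltr01) // pnatr_eq0 /=.
by have -> : y / (ln x / ln 2) * ln x = y * ln 2 by field; rewrite !gt_eqF.
Qed.

Lemma exprn_le_pow2 (R : realType) (x y : R) K :
  1 < x -> K%:R <= y / (ln x / ln 2) -> x ^+ K <= 2 `^ y.
Proof.
move=> x_gt1 Ky; rewrite -powR_mulrn ?(le_trans ler01 (ltW x_gt1)) //.
by rewrite -(powR_div_log2 y x_gt1); apply: (ler_powR (ltW x_gt1)).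
Qed.

Lemma natr_count_le_pow2 (R : realType) (f : R) m n K :
  (m <= n)%N -> (2 <= n)%N -> K%:R <= f * n%:R / (ln n%:R / ln 2) ->
  ((m * n).+1 ^ K)%:R <= 2 `^ (f * n%:R * 3) :> R.
Proof.
move=> mn n2 Kk; have n_gt1 : 1 < n%:R :> R by rewrite ltr1n.
rewrite natrX (@le_trans _ _ ((n%:R ^+ 3) ^+ K)) //.
  by rewrite lerXn2r ?nnegrE ?ler0n ?exprn_ge0 // -natrX ler_nat succ_mul_le_cube.
rewrite -exprM mulnC exprM powRrM [X in _ <= X]powR_mulrn ?powR_ge0 //.
rewrite lerXn2r ?nnegrE ?exprn_ge0 ?powR_ge0 ?ler0n //.
exact: exprn_le_pow2.
Qed.

Theorem lemma18 (R : realType) (rhoX rhoZ f : R) :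
  0 < rhoX < 1 / 2 -> 0 < rhoZ < 1 / 2 -> 0 < f < 1 ->
  exists N : nat, forall n mX mZ : nat, (N <= n)%N ->
    mX%:R = rhoX * n%:R -> mZ%:R = rhoZ * n%:R ->
    Pr_bad mX mZ n f <= 2 `^ (- (n%:R * (rhoX - 6 * f))).
Proof.
move=> _ /andP[_ rhoZ_lt] /andP[f_gt0 _].
exists 2%N => n mX mZ n_ge2 mX_eq mZ_eq.
have mZ_le_n : (mZ <= n)%N.
  by rewrite -(ler_nat R) mZ_eq ler_piMl //; lra.
have n_gt1 : 1 < n%:R :> R by rewrite ltr1n.
set k := f * n%:R / (ln n%:R / ln 2).
have k_ge0 : 0 <= k.
  have ln_n_ge0 : 0 <= ln (n%:R : R) by rewrite ln_ge0 ?(ltW n_gt1).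
  have ln2_ge0 : 0 <= ln (2 : R) by rewrite ln_ge0 ?ler1n.
  by rewrite /k divr_ge0 ?mulr_ge0 ?divr_ge0 ?invr_ge0 ?ler0n ?(ltW f_gt0).
apply: (le_trans (Pr_bad_le mX (@in_BC_small_sums _ _ _ f))).
rewrite [(2 ^ mX)%:R]natrX -powR_mulrn // mX_eq.
have K_le : (Num.truncn k)%:R <= k by rewrite truncn_le.
have count_le := natr_count_le_pow2 mZ_le_n n_ge2 K_le.
apply: (le_trans (ler_wpM2r _ count_le)); first by rewrite invr_ge0 powR_ge0.
rewrite -powRB ?pnatr_eq0 ?implybT //; apply: ler_powR; first by rewrite ler1n.
nra.
Qed.
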